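(* In the standing setting, if $\lim_{t\to T_*}\dot S(t)>0$, then $T_*<\infty$.
   Context: Standing setting: Fix $\lambda\in\mathbb{R}\setminus\{-1\}$ and a nonzero bounded measurable function $\gamma_0:\mathbb{T}^2\to\mathbb{R}$ of zero mean, $\mathbb{T}^2=[0,2\pi)^2$. For $f$ on $\mathbb{T}^2$ let $\langle f\rangle_0=\frac{1}{4\pi^2}\int_{\mathbb{T}^2}f(X_0,Y_0)\,\mathrm{d}X_0\mathrm{d}Y_0$. Let $\gamma_+=\sup\gamma_0>0$, $\gamma_-=\inf\gamma_0<0$. Define $S_*>0$ by $1/S_*=-(\lambda+1)\gamma_+$ if $\lambda<-1$ and $1/S_*=-(\lambda+1)\gamma_-$ if $\lambda>-1$. Let $S(t)$ solve $\dot S=\langle[1+(\lambda+1)\gamma_0(\cdot)S]^{-\frac{1}{\lambda+1}}\rangle_0^{-2(\lambda+1)}$, $S(0)=0$, on the maximal time interval $[0,T_* )$ on which $S(t)<S_*$; $T_*\in(0,\infty]$ is the singularity time. *)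

From HB Require Import structures.
From mathcomp Require Import all_boot all_order all_algebra.
From mathcomp Require Import all_classical all_reals all_analysis.
Set Implicit Arguments. Unset Strict Implicit. Unset Printing Implicit Defensive.
Import Order.TTheory GRing.Theory Num.Theory.
Import numFieldNormedType.Exports.
Local Open Scope classical_set_scope.
Local Open Scope ring_scope.

Section Setting.
Variable R : realType.

Definition leb2 := ((@lebesgue_measure R) \x (@lebesgue_measure R))%E.

Definition torus : set (R * R) := `[0, 2 * pi[ `*` `[0, 2 * pi[.

Definition avg0 (f : R * R -> R) : R :=
  (4 * pi ^+ 2)^-1 * Rintegral leb2 torus f.

(* standing hypotheses on gamma_0 : bounded, measurable, zero mean, nonzero
   (i.e. not a.e. zero on T^2) *)
Definition admissible_gamma (g : R * R -> R) : Prop :=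
  [/\ measurable_fun torus g,
      (exists M : R, forall x, torus x -> `|g x| <= M),
      Rintegral leb2 torus g = 0
    & (0 < leb2 (torus `&` [set x | (g x != 0)%R]))%E].

Definition gamma_plus (g : R * R -> R) : R := sup (g @` torus).
Definition gamma_minus (g : R * R -> R) : R := inf (g @` torus).

Definition Sstar (lam : R) (g : R * R -> R) : R :=
  if lam < -1 then (- (lam + 1) * gamma_plus g)^-1
  else (- (lam + 1) * gamma_minus g)^-1.

Definition rhsF (lam : R) (g : R * R -> R) (s : R) : R :=
  powR (avg0 (fun x => powR (1 + (lam + 1) * g x * s) (- (lam + 1)^-1)))
       (- (2 * (lam + 1))).

Definition is_sol_upto (lam : R) (g : R * R -> R) (S : R -> R) (T : \bar R)
  : Prop :=
  [/\ S 0 = 0,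
      S x @[x --> 0^'+] --> S 0,
      (forall t, 0 <= t -> (t%:E < T)%E -> S t < Sstar lam g)
    & (forall t, 0 < t -> (t%:E < T)%E -> is_derive t 1 S (rhsF lam g (S t)))].

Definition maximal_sol (lam : R) (g : R * R -> R) (S : R -> R) (T : \bar R)
  : Prop :=
  [/\ (0 < T)%E, is_sol_upto lam g S T
    & forall (S' : R -> R) (T' : \bar R), (T < T')%E -> ~ is_sol_upto lam g S' T'].

Definition to_Tstar (T : \bar R) : set_system R :=
  match T with
  | EFin r => r^'-
  | +oo%E => +oo%R
  | -oo%E => -oo%R
  end.

End Setting.

From HB Require Import structures.
From mathcomp Require Import all_boot all_order all_algebra.
From mathcomp Require Import all_classical all_reals all_analysis.
From mathcomp Require Import lra.
Import Order.TTheory GRing.Theory Num.Theory.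
Import numFieldNormedType.Exports.
Local Open Scope classical_set_scope.
Local Open Scope ring_scope.

(* Suppose the singularity time is infinite.
   The hypothesis lim_{t -> T_*} S'(t) > 0 then says that S' is eventually
   bounded below by some constant c > 0 (the limit may be +oo, so this is
   read in the extended reals).  By the mean value theorem, a function whose
   derivative stays above c > 0 on a half-line grows at least linearly and is
   therefore unbounded above.  But a solution S stays below S_* on its whole
   interval of existence, which for T_* = +oo is all of [0, +oo): a
   contradiction.  Hence T_* is finite. *)

Section PositiveLimit.
Context {R : realType} {T : Type} {F : set_system T} {F_filter : Filter F}.

Lemma cvg_pos_eventually_gt (f : T -> R) (l : \bar R) :
  (f x)%:E @[x --> F] --> l -> (0 < l)%E ->
  exists2 c : R, 0 < c & \forall x \near F, c < f x.
Proof.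
move=> fl l_gt0.
have [c c_gt0 cl] : exists2 c : R, 0 < c & (c%:E < l)%E.
  case: l l_gt0 {fl} => [r| |] //= r_gt0; last by exists 1; rewrite ?ltry.
  by exists (r / 2); rewrite ?lte_fin; move: r_gt0; rewrite lte_fin; lra.
exists c => //; near=> x.
have : (c%:E < (f x)%:E)%E by near: x; exact: fl _ (open_ereal_gt' cl).
by rewrite lte_fin.
Unshelve. all: by end_near.
Qed.

End PositiveLimit.

Section GrowthFromDerivative.
Context {R : realType}.
Implicit Types (f : R -> R) (a b c A M : R).

Lemma derive1_ge_increment f a b c : a < b ->
  {in `[a, b], forall x, derivable f x 1} ->
  {in `]a, b[, forall x, c <= derive1 f x} ->
  c * (b - a) <= f b - f a.
Proof.
move=> ab f_der f'_ge.
have f_cont : {within `[a, b], continuous f}.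
  by apply: derivable_within_continuous => x /f_der.
have f_is_der x : x \in `]a, b[ -> is_derive x 1 f (derive1 f x).
  move=> xab; rewrite derive1E; apply/derivableP/f_der.
  by apply: subset_itv_oo_cc.
have [d dab ->] := MVT ab f_is_der f_cont.
by rewrite ler_pM2r ?subr_gt0 //; exact: f'_ge.
Qed.

Lemma derive1_ge_unbounded f A c M : 0 < c ->
  (forall x, A < x -> derivable f x 1) ->
  (forall x, A < x -> c <= derive1 f x) ->
  exists2 x, A < x & M < f x.
Proof.
move=> c_gt0 f_der f'_ge.
pose a := A + 1; pose b := a + (`|M - f a| + 1) / c.
have Aa : A < a by rewrite /a; lra.
have ab : a < b by rewrite /b ltrDl divr_gt0 // ltr_pwDr.
have Ab : A < b by exact: lt_trans ab.
exists b => //.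
have : c * (b - a) <= f b - f a.
  apply: derive1_ge_increment => // x; rewrite in_itv /= => /andP[ax _].
    by apply: f_der; exact: lt_le_trans ax.
  by apply: f'_ge; exact: lt_trans ax.
have -> : c * (b - a) = `|M - f a| + 1.
  by rewrite /b addrAC subrr add0r mulrC divfK // lt0r_neq0.
by have := ler_norm (M - f a); lra.
Qed.

End GrowthFromDerivative.

Theorem lemma4p2 (R : realType) (lam : R) (g : R * R -> R)
  (S : R -> R) (Tstar : \bar R) (l : \bar R) :
  lam != -1 ->
  admissible_gamma g ->
  maximal_sol lam g S Tstar ->
  ((derive1 S t)%:E @[t --> to_Tstar Tstar] --> l) ->
  (0 < l)%E ->
  (Tstar < +oo)%E.
Proof.
move=> _ _ [T_gt0 [_ _ S_lt_Sstar S_der] _] S'l l_gt0.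
case: Tstar T_gt0 S'l S_lt_Sstar S_der => [r| |] //= _ S'l S_lt_Sstar S_der.
  by rewrite ltry.
have [c c_gt0 [A [_ S'_gt]]] := cvg_pos_eventually_gt _ _ S'l l_gt0.
pose A0 := Num.max A 0.
have [x A0x Sstar_lt] : exists2 x, A0 < x & Sstar lam g < S x.
  apply: (derive1_ge_unbounded S A0 c (Sstar lam g) c_gt0) => x.
    by rewrite gt_max => /andP[_ x_gt0]; apply: ex_derive; exact: S_der (ltry _).
  by rewrite gt_max => /andP[Ax _]; exact: ltW (S'_gt x Ax).
move: A0x; rewrite gt_max => /andP[_ x_gt0].
have := S_lt_Sstar x (ltW x_gt0) (ltry _).
by rewrite ltNge (ltW Sstar_lt).
Qed.
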